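(* Let $X$ be a nontrivial real Banach space. The following assertions are equivalent: (i) $X^*$ is weakly octahedral; (ii) whenever $E$ is a finite-dimensional subspace of $X^*$, $x\in B_X$, and $\varepsilon>0$, there is a $y^*\in S_{X^*}$ such that $\|x^*+y^*\|\geq(1-\varepsilon)(|x^*(x)|+\|y^*\|)$ for all $x^*\in E$; (iii) whenever $n\in\mathbb{N}$, $x_1^*,\dots,x_n^*\in S_{X^*}$, $x\in B_X$, and $\varepsilon>0$, there is a $y^*\in S_{X^*}$ such that $\|x_i^*+ty^*\|\geq(1-\varepsilon)(|x_i^*(x)|+t)$ for all $i\in\{1,\dots,n\}$ and $t\geq\varepsilon$.
   Context: $B_Z$, $S_Z$ denote the closed unit ball and unit sphere of a Banach space $Z$. A Banach space $Z$ is called weakly octahedral if for every finite-dimensional subspace $E$ of $Z$, every $z^*\in B_{Z^*}$, and every $\varepsilon>0$, there is a $y\in S_Z$ such that $\|z+y\|\geq(1-\varepsilon)(|z^*(z)|+\|y\|)$ for all $z\in E$. (Applied to $Z=X^*$, the functionals $z^*$ range over $B_{X^{**}}$.) *)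

From HB Require Import structures.
From mathcomp Require Import all_boot all_order all_algebra.
From mathcomp Require Import all_classical all_reals all_analysis.
Set Implicit Arguments. Unset Strict Implicit. Unset Printing Implicit Defensive.
Import Order.TTheory GRing.Theory Num.Theory.
Import numFieldNormedType.Exports.
Local Open Scope classical_set_scope.
Local Open Scope ring_scope.

Section Duality.
Variables (R : realType) (X : normedModType R).

Definition is_dual (f : X -> R) : Prop :=
  (forall (a : R) (u v : X), f (a *: u + v) = a * f u + f v) /\ continuous f.

Definition dnorm (f : X -> R) : R :=
  sup [set `|f x| | x in [set x : X | `|x| <= 1]].

Definition fd_dual_subspace (E : set (X -> R)) : Prop :=
  exists (n : nat) (f : 'I_n -> X -> R),
    (forall i, is_dual (f i)) /\
    E = [set z | exists c : 'I_n -> R, z = (fun x => \sum_(i < n) c i * f i x)].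

(* Phi is an element of the closed unit ball of X** (Phi is considered only
   on elements of X^dual): linear on X^dual and |Phi f| <= ||f|| *)
Definition in_bidual_ball (Phi : (X -> R) -> R) : Prop :=
  (forall (a : R) (f g : X -> R), is_dual f -> is_dual g ->
      Phi (fun x => a * f x + g x) = a * Phi f + Phi g) /\
  (forall f, is_dual f -> `|Phi f| <= dnorm f).

Definition dual_weakly_octahedral : Prop :=
  forall (E : set (X -> R)) (Phi : (X -> R) -> R) (eps : R),
    fd_dual_subspace E -> in_bidual_ball Phi -> 0 < eps ->
    exists y : X -> R, is_dual y /\ dnorm y = 1 /\
      forall z, E z ->
        dnorm (fun x => z x + y x) >= (1 - eps) * (`|Phi z| + dnorm y).

End Duality.

From HB Require Import structures.
From mathcomp Require Import all_boot all_order all_algebra finmap.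
From mathcomp Require Import all_classical all_reals all_analysis.
From mathcomp Require Import ring lra.
Import Order.TTheory GRing.Theory Num.Theory.
Import numFieldNormedType.Exports.
Local Open Scope classical_set_scope.
Local Open Scope ring_scope.
Set Implicit Arguments. Unset Strict Implicit. Unset Printing Implicit Defensive.

(* (i) => (ii) because evaluation at x lies in B_{X**}, and (ii) => (iii) by
   applying (ii) to the span of the x_i^* and to the functionals x_i^* / t.
   The converses only involve the unit sphere of the finite-dimensional space E,
   which has finite nets.  (iii) => (ii): apply (iii) to a fine net of S_E; the
   restriction t >= eps only excludes functionals z of norm above 2 / eps, for
   which ||z + y|| >= ||z|| - 1 suffices.  (ii) => (i): by Helly's theorem some
   x in B_X satisfies |z(x) - Phi(z)| <= delta ||z|| on E, and (ii) at this x
   gives (i).  Helly's theorem is proved on a net (w_j) by minimising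
   sum_j (w_j(x) - Phi(w_j))^2 over B_X: at an almost-minimiser x_0 the
   first-order condition gives ||g|| < Phi(g) for
   g = sum_j (Phi(w_j) - w_j(x_0)) w_j unless the infimum is 0. *)

Section DualNorm.
Variables (R : realType) (X : normedModType R).
Implicit Types (f g : X -> R) (x u v : X).

Lemma dual0 f : is_dual f -> f 0 = 0.
Proof.
case=> lin _; have := lin (-1) 0 0.
by rewrite scaleN1r oppr0 addr0 mulN1r addNr.
Qed.

Lemma dualZ f a u : is_dual f -> f (a *: u) = a * f u.
Proof. by move=> fd; have := fd.1 a u 0; rewrite !addr0 dual0 // addr0. Qed.

Lemma dualD f u v : is_dual f -> f (u + v) = f u + f v.
Proof. by move=> fd; have := fd.1 1 u v; rewrite scale1r mul1r. Qed.

Lemma dualN f u : is_dual f -> f (- u) = - f u.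
Proof. by move=> fd; rewrite -scaleN1r dualZ // mulN1r. Qed.

Lemma dualB f u v : is_dual f -> f (u - v) = f u - f v.
Proof. by move=> fd; rewrite dualD // dualN. Qed.

Lemma is_dual_lin f g a b : is_dual f -> is_dual g ->
  is_dual (fun u => a * f u + b * g u).
Proof.
move=> fd gd; split=> [c u v|x]; first by rewrite !(fd.1, gd.1); ring.
apply: (@continuousD _ _ _ (fun u => a * f u) (fun u => b * g u)).
  exact: continuousM (@cst_continuous _ _ a x) (fd.2 x).
exact: continuousM (@cst_continuous _ _ b x) (gd.2 x).
Qed.

Lemma is_dual_cst0 : is_dual (fun _ : X => 0 : R).
Proof. by split=> [*|]; [rewrite mulr0 addr0 | exact: cst_continuous]. Qed.

Lemma is_dualM f a : is_dual f -> is_dual (fun u => a * f u).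
Proof.
move=> fd; have := is_dual_lin a 0 fd fd.
by congr is_dual; apply: funext => u; ring.
Qed.

Lemma is_dualD f g : is_dual f -> is_dual g -> is_dual (fun u => f u + g u).
Proof.
move=> fd gd; have := is_dual_lin 1 1 fd gd.
by congr is_dual; apply: funext => u; ring.
Qed.

Lemma is_dualB f g : is_dual f -> is_dual g -> is_dual (fun u => f u - g u).
Proof.
move=> fd gd; have := is_dual_lin 1 (-1) fd gd.
by congr is_dual; apply: funext => u; ring.
Qed.

Lemma is_dual_sum (I : Type) (s : seq I) (c : I -> R) (F : I -> X -> R) :
  (forall i, is_dual (F i)) -> is_dual (fun x => \sum_(i <- s) c i * F i x).
Proof.
move=> Fd; elim: s => [|i s IH].
  by under [fun x => _]funext => x do rewrite big_nil; exact: is_dual_cst0.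
under [fun x => _]funext => x do rewrite big_cons.
exact: is_dualD (is_dualM _ (Fd i)) IH.
Qed.

Lemma dnorm_set0 f : [set `|f x| | x in [set x : X | `|x| <= 1]] !=set0.
Proof. by exists `|f 0|, 0; rewrite //= normr0. Qed.

Lemma dual_bounded f : is_dual f -> exists2 C, 0 < C & forall x, `|f x| <= C * `|x|.
Proof.
move=> fd; have /cvgrPdist_lt/(_ 1 ltr01) := fd.2 0.
rewrite dual0 // => /nbhs_ballP[e e_gt0 fe].
exists (2 / e) => [|x]; first by rewrite divr_gt0.
have [->|x0] := eqVneq x 0; first by rewrite dual0 // !normr0 mulr0.
have nx_gt0 : 0 < `|x| by rewrite normr_gt0.
have ke_ge0 : 0 <= e / 2 / `|x| by rewrite !divr_ge0 ?ltW.
have xe : ball 0 e ((e / 2 / `|x|) *: x).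
  rewrite -ball_normE /= sub0r normrN normrZ ger0_norm // divfK ?gt_eqF //.
  by rewrite ltr_pdivrMr // ltr_pMr // ltr1n.
have := fe _ xe; rewrite sub0r normrN dualZ // normrM ger0_norm // => /ltW.
rewrite -ler_pdivlMl ?divr_gt0 // mulr1 => /le_trans; apply.
by rewrite !invf_div mulrC.
Qed.

Lemma ler_dnorm f x : is_dual f -> `|x| <= 1 -> `|f x| <= dnorm f.
Proof.
move=> fd x1; have [C C_gt0 fC] := dual_bounded fd.
apply: sup_upper_bound; last by exists x.
split; first exact: dnorm_set0.
exists C => _ [y /= y1 <-]; apply: le_trans (fC y) _.
by rewrite -[leRHS]mulr1 ler_wpM2l // ltW.
Qed.

Lemma dnorm_le_ub f M : (forall x, `|x| <= 1 -> `|f x| <= M) -> dnorm f <= M.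
Proof. by move=> fM; apply: ge_sup => [|_ [y /= y1 <-]]; [exact: dnorm_set0 | exact: fM]. Qed.

Lemma dnorm_nneg f : is_dual f -> 0 <= dnorm f.
Proof. by move=> fd; apply: le_trans (normr_ge0 (f 0)) (ler_dnorm fd _); rewrite normr0. Qed.

Lemma ler_dnormM f x : is_dual f -> `|f x| <= dnorm f * `|x|.
Proof.
move=> fd; have [->|x0] := eqVneq x 0; first by rewrite dual0 // !normr0 mulr0.
have nx_gt0 : 0 < `|x| by rewrite normr_gt0.
have : `|(`|x|^-1 *: x)| <= 1 by rewrite normrZ normfV normr_id mulVf ?gt_eqF.
move/(ler_dnorm fd); rewrite dualZ // normrM normfV normr_id.
by rewrite ler_pdivrMl // mulrC.
Qed.

Lemma dnorm0_apply f x : is_dual f -> dnorm f = 0 -> f x = 0.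
Proof. by move=> fd f0; apply/eqP; rewrite -normr_le0 -(mul0r `|x|) -f0 ler_dnormM. Qed.

Lemma dnorm_le_oneside f x0 r : is_dual f ->
  (forall x, `|x| <= 1 -> f x <= f x0 + r) -> dnorm f <= f x0 + r.
Proof.
move=> fd fr; apply: dnorm_le_ub => x x1; rewrite ler_norml fr // andbT.
by rewrite lerNl -dualN // fr // normrN.
Qed.

Lemma ler_dnormD f g : is_dual f -> is_dual g ->
  dnorm (fun u => f u + g u) <= dnorm f + dnorm g.
Proof.
move=> fd gd; apply: dnorm_le_ub => x x1; apply: le_trans (ler_normD _ _) _.
by apply: lerD; exact: ler_dnorm.
Qed.

Lemma dnormM f a : is_dual f -> dnorm (fun u => a * f u) = `|a| * dnorm f.
Proof.
have dnormM_le b g : is_dual g -> dnorm (fun u => b * g u) <= `|b| * dnorm g.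
  move=> gd; apply: dnorm_le_ub => x x1.
  by rewrite normrM ler_wpM2l // ler_dnorm.
move=> fd; apply/le_anti; rewrite dnormM_le //=.
have [->|a0] := eqVneq a 0; first by rewrite normr0 mul0r; apply/dnorm_nneg/is_dualM.
have := dnormM_le a^-1 _ (is_dualM a fd).
under [fun u => _]funext => u do rewrite mulrA mulVf // mul1r.
by rewrite normfV ler_pdivlMl ?normr_gt0.
Qed.

Lemma ler_dnormB f g : is_dual f -> is_dual g ->
  dnorm (fun u => f u - g u) <= dnorm f + dnorm g.
Proof.
move=> fd gd; rewrite -[dnorm g]mul1r -normrN1 -dnormM //.
have -> : (fun u => f u - g u) = (fun u => f u + -1 * g u).
  by apply: funext => u; rewrite mulN1r.
exact: ler_dnormD (is_dualM _ gd).
Qed.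

Lemma lerB_dnormD f g : is_dual f -> is_dual g ->
  dnorm f - dnorm g <= dnorm (fun u => f u + g u).
Proof.
move=> fd gd; rewrite lerBlDr; have := ler_dnormB (is_dualD fd gd) gd.
by under [fun u => _]funext => u do rewrite addrK.
Qed.

Lemma ler_dnorm_sum (I : Type) (s : seq I) (c : I -> R) (F : I -> X -> R) :
  (forall i, is_dual (F i)) ->
  dnorm (fun x => \sum_(i <- s) c i * F i x) <= \sum_(i <- s) `|c i| * dnorm (F i).
Proof.
move=> Fd; elim: s => [|i s IH].
  rewrite big_nil; apply: dnorm_le_ub => x _; by rewrite big_nil normr0.
rewrite big_cons; under [fun x => _]funext => x do rewrite big_cons.
apply: le_trans (ler_dnormD (is_dualM _ (Fd i)) (is_dual_sum _ _ Fd)) _.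
by rewrite dnormM // lerD2l.
Qed.

End DualNorm.

Section Bidual.
Variables (R : realType) (X : normedModType R) (Phi : (X -> R) -> R).
Hypothesis Phi_ball : in_bidual_ball Phi.
Implicit Types (f g : X -> R).

Lemma bidual0 : Phi (fun _ => 0) = 0.
Proof.
have := Phi_ball.1 (-1) _ _ (@is_dual_cst0 _ X) (@is_dual_cst0 _ X).
under [fun x => _]funext => x do rewrite mulr0 addr0.
lra.
Qed.

Lemma bidualM f a : is_dual f -> Phi (fun u => a * f u) = a * Phi f.
Proof.
move=> fd; have := Phi_ball.1 a _ _ fd (@is_dual_cst0 _ X).
by under [fun x => _]funext => x do rewrite addr0; rewrite bidual0 addr0.
Qed.

Lemma bidualB f g : is_dual f -> is_dual g ->
  Phi (fun u => f u - g u) = Phi f - Phi g.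
Proof.
move=> fd gd; have := Phi_ball.1 (-1) _ _ gd fd.
under [fun x => _]funext => x do rewrite mulN1r addrC.
by move=> ->; rewrite mulN1r addrC.
Qed.

Lemma bidual_sum (I : Type) (s : seq I) (c : I -> R) (F : I -> X -> R) :
  (forall i, is_dual (F i)) ->
  Phi (fun x => \sum_(i <- s) c i * F i x) = \sum_(i <- s) c i * Phi (F i).
Proof.
move=> Fd; elim: s => [|i s IH].
  by under [fun x => _]funext => x do rewrite big_nil; rewrite big_nil bidual0.
under [fun x => _]funext => x do rewrite big_cons.
by rewrite Phi_ball.1 ?IH ?big_cons //; exact: is_dual_sum.
Qed.

End Bidual.

Section Dspan.
Variables (R : realType) (X : normedModType R) (n : nat) (F : 'I_n -> X -> R).

Definition dspan : set (X -> R) :=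
  [set z | exists c : 'I_n -> R, z = (fun x => \sum_(i < n) c i * F i x)].

Lemma dspan_is_dual z : (forall i, is_dual (F i)) -> dspan z -> is_dual z.
Proof. by move=> Fd [c ->]; exact: is_dual_sum. Qed.

Lemma dspan_mem i : dspan (F i).
Proof.
exists (fun j => (j == i)%:R); apply: funext => x.
by rewrite (bigD1 i) //= eqxx mul1r big1 ?addr0 // => j /negbTE->; rewrite mul0r.
Qed.

Lemma dspanM z a : dspan z -> dspan (fun u => a * z u).
Proof.
move=> [c ->]; exists (fun i => a * c i); apply: funext => x.
by rewrite mulr_sumr; apply: eq_bigr => i _; rewrite mulrA.
Qed.

End Dspan.

Lemma segment_in_ball1 (R : realType) (X : normedModType R) (x0 x : X) (t : R) :
  `|x0| <= 1 -> `|x| <= 1 -> 0 <= t <= 1 -> `|x0 + t *: (x - x0)| <= 1.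
Proof.
move=> x01 x1 /andP[t0 t1].
have -> : x0 + t *: (x - x0) = (1 - t) *: x0 + t *: x.
  by rewrite scalerBr scalerBl scale1r addrA addrAC.
apply: le_trans (ler_normD _ _) _.
rewrite !normrZ (ger0_norm t0) ger0_norm ?subr_ge0 //; nra.
Qed.

Section Defect.
Variables (R : realType) (X : normedModType R) (n : nat).
Variables (w : 'I_n -> X -> R) (p : 'I_n -> R).
Hypothesis wd : forall j, is_dual (w j).

Definition defect (x : X) : R := \sum_(j < n) (w j x - p j) ^+ 2.

Lemma defect_ge0 x : 0 <= defect x.
Proof. by apply: sumr_ge0 => j _; exact: sqr_ge0. Qed.

Lemma sqr_le_defect x j : (w j x - p j) ^+ 2 <= defect x.
Proof. by rewrite /defect (bigD1 j) //= lerDl; apply: sumr_ge0 => i _; exact: sqr_ge0. Qed.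

Lemma defect_segment x0 x t :
  defect (x0 + t *: (x - x0)) = defect x0
    - 2 * t * \sum_(j < n) (p j - w j x0) * (w j x - w j x0)
    + t ^+ 2 * \sum_(j < n) (w j x - w j x0) ^+ 2.
Proof.
rewrite /defect !mulr_sumr -sumrB -big_split /=; apply: eq_bigr => j _.
by rewrite dualD // dualZ // dualB //; ring.
Qed.

Lemma near_min_defect_slope x0 e t : `|x0| <= 1 ->
  (forall x, `|x| <= 1 -> defect x0 <= defect x + e) -> 0 <= t <= 1 ->
  forall x, `|x| <= 1 ->
  2 * t * \sum_(j < n) (p j - w j x0) * (w j x - w j x0)
    <= e + t ^+ 2 * \sum_(j < n) (w j x - w j x0) ^+ 2.
Proof.
move=> x01 x0_min t01 x x1.
by have := x0_min _ (segment_in_ball1 x01 x1 t01); rewrite defect_segment; lra.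
Qed.

Lemma sum_sqr_dual_diff_le x x0 : `|x| <= 1 -> `|x0| <= 1 ->
  \sum_(j < n) (w j x - w j x0) ^+ 2 <= 4 * \sum_(j < n) dnorm (w j) ^+ 2.
Proof.
move=> x1 x01; rewrite mulr_sumr; apply: ler_sum => j _.
have : `|w j x - w j x0| <= 2 * dnorm (w j).
  rewrite -dualB // mulrC; apply: le_trans (ler_dnormM _ (wd j)) _.
  apply: ler_wpM2l; first exact: dnorm_nneg.
  by apply: le_trans (ler_normB _ _) _; lra.
by rewrite ler_norml => /andP[lo hi]; nra.
Qed.

Lemma near_min_dnorm_le x0 e t : `|x0| <= 1 ->
  (forall x, `|x| <= 1 -> defect x0 <= defect x + e) -> 0 < t <= 1 ->
  dnorm (fun x => \sum_(j < n) (p j - w j x0) * w j x)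
    <= \sum_(j < n) (p j - w j x0) * w j x0
       + (e + t ^+ 2 * (4 * \sum_(j < n) dnorm (w j) ^+ 2)) / (2 * t).
Proof.
move=> x01 x0_min /andP[t_gt0 t_le1].
apply: (dnorm_le_oneside (x0 := x0)); first exact: is_dual_sum.
move=> x x1; have t01 : 0 <= t <= 1 by rewrite ltW.
have slope := near_min_defect_slope x01 x0_min t01 x1.
have := ler_wpM2l (sqr_ge0 t) (sum_sqr_dual_diff_le x1 x01).
have -> : \sum_(j < n) (p j - w j x0) * w j x = \sum_(j < n) (p j - w j x0) * w j x0
    + \sum_(j < n) (p j - w j x0) * (w j x - w j x0).
  by rewrite -big_split /=; apply: eq_bigr => j _; ring.
by rewrite lerD2l ler_pdivlMr ?mulr_gt0 //; nra.
Qed.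

End Defect.

Lemma near_min_defect_le (R : realType) (X : normedModType R) n
    (w : 'I_n -> X -> R) Phi x0 e t :
  let p j := Phi (w j) in
  (forall j, is_dual (w j)) -> in_bidual_ball Phi -> `|x0| <= 1 ->
  (forall x, `|x| <= 1 -> defect w p x0 <= defect w p x + e) -> 0 < t <= 1 ->
  defect w p x0 <= (e + t ^+ 2 * (4 * \sum_(j < n) dnorm (w j) ^+ 2)) / (2 * t).
Proof.
move=> p wd Ph x01 x0_min t01.
pose g x := \sum_(j < n) (p j - w j x0) * w j x.
have Phi_g : Phi g = g x0 + defect w p x0.
  rewrite bidual_sum // /defect -big_split /=; apply: eq_bigr => j _; rewrite /p; ring.
have := le_trans (ler_norm _) (Ph.2 g (is_dual_sum _ _ wd)); rewrite Phi_g.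
have : dnorm g <= g x0 + (e + t ^+ 2 * (4 * \sum_(j < n) dnorm (w j) ^+ 2)) / (2 * t).
  by move: (near_min_dnorm_le wd x01 x0_min t01).
lra.
Qed.

Lemma helly_approx (R : realType) (X : normedModType R) n (w : 'I_n -> X -> R)
    Phi eta :
  (forall j, is_dual (w j)) -> in_bidual_ball Phi -> 0 < eta ->
  exists x : X, `|x| <= 1 /\ forall j, `|w j x - Phi (w j)| <= eta.
Proof.
move=> wd Ph eta_gt0; pose p j := Phi (w j).
suff [x x1 small] : exists2 x : X, `|x| <= 1 & defect w p x <= eta ^+ 2.
  exists x; split=> // j; have := le_trans (sqr_le_defect w p x j) small.
  by rewrite ler_norml; move: (w j x - _) => a sa; apply/andP; split; nra.
apply: contrapT => no_small.
have eta2_lt x : `|x| <= 1 -> eta ^+ 2 < defect w p x.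
  by move=> x1; rewrite ltNge; apply/negP => small; apply: no_small; exists x.
pose A := [set defect w p x | x in [set x : X | `|x| <= 1]].
have A_inf : has_inf A.
  split; first by exists (defect w p 0), 0; rewrite //= normr0.
  by exists 0 => _ [x _ <-]; exact: defect_ge0.
pose d := inf A.
have d_lb x : `|x| <= 1 -> d <= defect w p x.
  by move=> x1; apply: (ge_inf A_inf.2); exists x.
have d_gt0 : 0 < d.
  apply: lt_le_trans (exprn_gt0 2 eta_gt0) _.
  by apply: lb_le_inf A_inf.1 _ => _ [x /= x1 <-]; exact/ltW/eta2_lt.
pose D := 4 * \sum_(j < n) dnorm (w j) ^+ 2.
have D_ge0 : 0 <= D by rewrite mulr_ge0 // sumr_ge0 // => j _; exact: sqr_ge0.
(* [t <= 1/2] keeps the segment from x0 inside B_X, and [t * D <= d / 2] tames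
   the quadratic term of the first-order condition. *)
pose t := d / (2 * (D + d)).
have tE : t * (2 * (D + d)) = d by rewrite divfK // gt_eqF //; lra.
have t_gt0 : 0 < t by rewrite divr_gt0 //; lra.
pose e := d * t / 2.
have e_gt0 : 0 < e by rewrite divr_gt0 // mulr_gt0.
have [_ [x0 x01 <-]] := inf_adherent e_gt0 A_inf; rewrite -/d => x0_near.
have x0_min x : `|x| <= 1 -> defect w p x0 <= defect w p x + e.
  by move=> x1; have := d_lb x x1; lra.
have t01 : 0 < t <= 1 by apply/andP; split; nra.
have x0_defect : defect w p x0 <= (e + t ^+ 2 * D) / (2 * t).
  by move: (near_min_defect_le wd Ph x01 x0_min t01); rewrite -/D.
have tD : t * D <= d / 2 by nra.
have tD2 : t * (t * D) <= t * (d / 2) by rewrite ler_pM2l.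
have t2_gt0 : 0 < 2 * t by rewrite mulr_gt0.
move: x0_defect; rewrite ler_pdivlMr // /e.
have -> : t ^+ 2 * D = t * (t * D) by ring.
by have := d_lb x0 x01; nra.
Qed.

Section FiniteDimension.
Variables (R : realType) (X : normedModType R).

Definition lin_free n (F : 'I_n -> X -> R) : Prop :=
  forall c : 'I_n -> R, (forall x, \sum_(i < n) c i * F i x = 0) -> forall i, c i = 0.

Lemma dspan_drop_dependent n (F : 'I_n.+1 -> X -> R) (c : 'I_n.+1 -> R) k :
  (forall x, \sum_(i < n.+1) c i * F i x = 0) -> c k != 0 ->
  dspan F = dspan (fun i => F (lift k i)).
Proof.
move=> Fc0 ck; have sum_lift (G : 'I_n.+1 -> R) :
    \sum_(i < n.+1) G i = G k + \sum_(i < n) G (lift k i).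
  by rewrite (bigD1_ord k (P := xpredT)).
have Fk x : F k x = - (\sum_(i < n) c (lift k i) * F (lift k i) x) / c k.
  apply: (mulfI ck); rewrite mulrCA mulfV // mulr1.
  by have := Fc0 x; rewrite sum_lift; lra.
apply/seteqP; split=> _ [a ->].
  exists (fun i => a (lift k i) - a k * c (lift k i) / c k); apply: funext => x.
  rewrite sum_lift Fk -sumrN mulr_suml mulr_sumr -big_split /=.
  by apply: eq_bigr => i _; field.
exists (fun i => if unlift k i is Some i' then a i' else 0); apply: funext => x.
by rewrite sum_lift unlift_none mul0r add0r; apply: eq_bigr => i _; rewrite liftK.
Qed.

Lemma dspan_free_basis n (F : 'I_n -> X -> R) : (forall i, is_dual (F i)) ->
  exists m (G : 'I_m -> X -> R),
    [/\ forall i, is_dual (G i), lin_free G & dspan F = dspan G].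
Proof.
elim: n F => [|n IH] F Fd; first by exists 0%N, F; split=> // c _ [].
have [Ffree|] := pselect (lin_free F); first by exists n.+1, F.
move=> /existsNP[c /not_implyP[Fc0 /existsNP[k /eqP ck]]].
have [m [G [Gd Gfree FG]]] := IH _ (fun i => Fd (lift k i)).
by exists m, G; split=> //; rewrite (dspan_drop_dependent Fc0 ck).
Qed.

End FiniteDimension.

Section RowVectors.
Variables (R : realType) (m : nat).

Lemma rV_entry_le_norm (v : 'rV[R]_m) i : `|v ord0 i| <= `|v|.
Proof.
have -> : `|v| = mx_norm v by [].
rewrite mx_normrE.
exact: (le_bigmax _ (fun ij : 'I_1 * 'I_m => `|v ij.1 ij.2|) (ord0, i)).
Qed.

Lemma rV_closed_ball_compact (r : R) : compact [set v : 'rV[R]_m | `|v| <= r].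
Proof.
apply: bounded_closed_compact.
  by exists r; split=> [|M rM v /= vr]; [exact: num_real | exact: le_trans vr (ltW rM)].
apply: (@preimage_closed _ _ (fun v : 'rV[R]_m => `|v|) [set x | x <= r]).
  by move=> v _; exact: norm_continuous.
exact: closed_le.
Qed.

Lemma rV_sphere_compact : compact [set v : 'rV[R]_m | `|v| = 1].
Proof.
apply: bounded_closed_compact.
  by exists 1; split=> [|M M1 v /= ->]; [exact: num_real | exact: ltW].
apply: (@preimage_closed _ _ (fun v : 'rV[R]_m => `|v|) [set x | x = 1]).
  by move=> v _; exact: norm_continuous.
exact: closed_eq.
Qed.

End RowVectors.

Section RowCombination.
Variables (R : realType) (X : normedModType R) (m : nat) (G : 'I_m -> X -> R).
Hypothesis Gd : forall i, is_dual (G i).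

Definition rcomb (v : 'rV[R]_m) : X -> R := fun x => \sum_(i < m) v ord0 i * G i x.

Lemma is_dual_rcomb v : is_dual (rcomb v).
Proof. exact: is_dual_sum. Qed.

Lemma rcombB v w x : rcomb (v - w) x = rcomb v x - rcomb w x.
Proof. by rewrite /rcomb -sumrB; apply: eq_bigr => i _; rewrite !mxE mulrBl. Qed.

Lemma rcombZ a v x : rcomb (a *: v) x = a * rcomb v x.
Proof. by rewrite /rcomb mulr_sumr; apply: eq_bigr => i _; rewrite mxE mulrA. Qed.

Lemma dnorm_rcomb_le v : dnorm (rcomb v) <= (\sum_(i < m) dnorm (G i)) * `|v|.
Proof.
apply: le_trans (ler_dnorm_sum _ _ Gd) _; rewrite mulr_suml.
apply: ler_sum => i _; rewrite mulrC ler_wpM2l ?dnorm_nneg //.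
exact: rV_entry_le_norm.
Qed.

Lemma dnorm_rcomb_continuous : continuous (fun v => dnorm (rcomb v)).
Proof.
move=> v; apply/(@cvgrPdist_le _ _ _ (nbhs v) (nbhs_filter v)) => e e_gt0.
pose L := \sum_(i < m) dnorm (G i).
have L_ge0 : 0 <= L by apply: sumr_ge0 => i _; exact: dnorm_nneg.
have dnormB_le w w' : dnorm (rcomb w) <= dnorm (rcomb w') + L * `|w - w'|.
  have -> : rcomb w = (fun x => rcomb w' x + rcomb (w - w') x).
    by apply: funext => x; rewrite rcombB addrC subrK.
  apply: le_trans (ler_dnormD (is_dual_rcomb _) (is_dual_rcomb _)) _.
  by rewrite lerD2l dnorm_rcomb_le.
apply/nbhs_ballP; exists (e / (L + 1)) => /=; first by rewrite divr_gt0 //; lra.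
move=> w; rewrite -ball_normE /= => vw.
have := dnormB_le v w; have := dnormB_le w v; rewrite distrC.
have : (L + 1) * `|v - w| < e by rewrite mulrC -ltr_pdivlMr //; lra.
by rewrite ler_norml; nra.
Qed.

End RowCombination.

Lemma rV_norm_le_dnorm_rcomb (R : realType) (X : normedModType R) m
    (G : 'I_m -> X -> R) :
  (forall i, is_dual (G i)) -> lin_free G ->
  exists2 K, 0 < K & forall v, `|v| <= K * dnorm (rcomb G v).
Proof.
move=> Gd Gfree; have N_ge0 v : 0 <= dnorm (rcomb G v).
  exact/dnorm_nneg/is_dual_rcomb.
have [[v0 v0_neq0]|all0] := pselect (exists v : 'rV[R]_m, v != 0); last first.
  exists 1 => // v; have -> : v = 0 by apply: contrapT => /eqP v0; apply: all0; exists v.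
  by rewrite normr0 mul1r.
pose S := [set v : 'rV[R]_m | `|v| = 1].
have normalize v : v != 0 -> S (`|v|^-1 *: v).
  by move=> v_neq0; rewrite /S /= normrZ normfV normr_id mulVf ?normr_eq0.
have [c /[!inE] c_unit c_min] := compact_EVT_min (ex_intro _ _ (normalize v0 v0_neq0))
  (@rV_sphere_compact R m) (continuous_subspaceT (dnorm_rcomb_continuous Gd)).
have Nc_gt0 : 0 < dnorm (rcomb G c).
  rewrite lt_neqAle N_ge0 andbT; apply/eqP => /esym Nc0.
  have c0 : c = 0.
    apply/rowP => i; rewrite mxE; apply: (Gfree (fun i => c ord0 i)) => x.
    exact: dnorm0_apply (is_dual_rcomb Gd c) Nc0.
  by move: c_unit; rewrite /S /= c0 normr0 => /eqP; rewrite eq_sym oner_eq0.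
exists (dnorm (rcomb G c))^-1 => [|v]; first by rewrite invr_gt0.
have [->|v_neq0] := eqVneq v 0; first by rewrite normr0 mulr_ge0 // invr_ge0 ltW.
have := c_min _ (mem_set (normalize v v_neq0)).
have -> : rcomb G (`|v|^-1 *: v) = (fun x => `|v|^-1 * rcomb G v x).
  by apply: funext => x; rewrite rcombZ.
rewrite (dnormM _ (is_dual_rcomb Gd v)) normfV normr_id mulrC ler_pdivlMr ?normr_gt0 //.
by move=> h; rewrite -(ler_pM2l Nc_gt0) mulrA mulfV ?gt_eqF // mul1r.
Qed.

Lemma dspan_ball_net (R : realType) (X : normedModType R) n (F : 'I_n -> X -> R)
    delta :
  (forall i, is_dual (F i)) -> 0 < delta ->
  exists k (w : 'I_k -> X -> R), (forall j, is_dual (w j)) /\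
    forall z, dspan F z -> dnorm z <= 1 ->
      exists j, dnorm (fun x => z x - w j x) <= delta.
Proof.
move=> Fd delta_gt0.
have [m [G [Gd Gfree ->]]] := dspan_free_basis Fd.
have [K K_gt0 leK] := rV_norm_le_dnorm_rcomb Gd Gfree.
pose L := \sum_(i < m) dnorm (G i).
have L_ge0 : 0 <= L by apply: sumr_ge0 => i _; exact: dnorm_nneg.
pose rho := delta / (L + 1).
have rho_gt0 : 0 < rho by rewrite divr_gt0 //; lra.
have := @rV_closed_ball_compact R m K; rewrite compact_cover.
move=> /(_ _ [set: 'rV[R]_m] (fun v => ball v rho) (fun v _ => ball_open v rho)).
case=> [v _|D _ coverD]; first by exists v => //; exact: ballxx.
pose s := enum_fset D.
exists (size s), (fun j => rcomb G (nth 0 s j)).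
split=> [j|_ [c ->] z1]; first exact: is_dual_rcomb.
pose v := \row_(i < m) c i.
have cv x : \sum_(i < m) c i * G i x = rcomb G v x.
  by apply: eq_bigr => i _; rewrite mxE.
have vK : `|v| <= K.
  apply: le_trans (leK v) _; rewrite -[leRHS]mulr1 ler_pM2l //.
  by rewrite (funext cv) in z1.
have [c' c'D vc'] := coverD v vK.
have c's : c' \in s by [].
exists (Ordinal (etrans (index_mem c' s) c's)); rewrite /= nth_index //.
under [fun x => _]funext => x do rewrite cv -rcombB.
apply: le_trans (dnorm_rcomb_le Gd _) _.
move: vc'; rewrite -ball_normE /= distrC => /ltW vc'.
apply: le_trans (ler_wpM2l L_ge0 vc') _.
by rewrite /rho mulrA ler_pdivrMr; [nra | lra].
Qed.

Lemma dspan_sphere_net (R : realType) (X : normedModType R) n (F : 'I_n -> X -> R)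
    delta :
  (forall i, is_dual (F i)) -> 0 < delta ->
  exists k (u : 'I_k -> X -> R), (forall j, is_dual (u j) /\ dnorm (u j) = 1) /\
    forall z, dspan F z -> dnorm z = 1 ->
      exists j, dnorm (fun x => z x - u j x) <= delta.
Proof.
move=> Fd delta_gt0; pose S z := dspan F z /\ dnorm z = 1.
have [[z0 Sz0]|S0] := pselect (exists z, S z); last first.
  by exists 0%N, (fun _ _ => 0); split=> [[]//|z Ez z1]; exfalso; apply: S0; exists z.
have [k [w [wd wnet]]] := dspan_ball_net Fd (divr_gt0 delta_gt0 (ltr0n _ 2)).
pose near j z := S z /\ dnorm (fun x => z x - w j x) <= delta / 2.
(* Net points within delta/2 of the sphere are moved onto it. *)
pose u j := if pselect (exists z, near j z) is left h then sval (cid h) else z0.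
have u_near j : S (u j) /\
    ((exists z, near j z) -> dnorm (fun x => u j x - w j x) <= delta / 2).
  rewrite /u; case: pselect => [h|nh]; last by split=> // /nh.
  by case: (cid h) => /= z [Sz zw].
have ud j : is_dual (u j) by have [[/(dspan_is_dual Fd)]] := u_near j.
exists k, u; split=> [j|z Ez z1]; first by split; [exact: ud | case: (u_near j) => -[]].
have zd := dspan_is_dual Fd Ez.
have [j zw] : exists j, dnorm (fun x => z x - w j x) <= delta / 2.
  by apply: wnet Ez _; rewrite z1.
exists j; have uw := (u_near j).2 (ex_intro _ z (conj (conj Ez z1) zw)).
have -> : (fun x => z x - u j x) = (fun x => (z x - w j x) - (u j x - w j x)).
  by apply: funext => x; ring.
by apply: le_trans (ler_dnormB (is_dualB zd (wd j)) (is_dualB (ud j) (wd j))) _; lra.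
Qed.

Lemma helly_approx_dspan (R : realType) (X : normedModType R) n
    (F : 'I_n -> X -> R) Phi delta :
  (forall i, is_dual (F i)) -> in_bidual_ball Phi -> 0 < delta ->
  exists x : X, `|x| <= 1 /\
    forall z, dspan F z -> `|z x - Phi z| <= delta * dnorm z.
Proof.
move=> Fd Ph delta_gt0; have delta3_gt0 : 0 < delta / 3 by rewrite divr_gt0.
have [k [u [ud unet]]] := dspan_sphere_net Fd delta3_gt0.
have ud' j : is_dual (u j) by case: (ud j).
have [x [x1 xu]] := helly_approx ud' Ph delta3_gt0.
exists x; split=> // z Ez; have zd := dspan_is_dual Fd Ez.
have unit v : dspan F v -> dnorm v = 1 -> `|v x - Phi v| <= delta.
  move=> Ev v1; have vd := dspan_is_dual Fd Ev; have [j vu] := unet v Ev v1.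
  have vux : `|v x - u j x| <= delta / 3.
    exact: le_trans (ler_dnorm (is_dualB vd (ud' j)) x1) vu.
  have Phi_vu : `|Phi v - Phi (u j)| <= delta / 3.
    by rewrite -bidualB //; apply: le_trans (Ph.2 _ (is_dualB vd (ud' j))) vu.
  have -> : v x - Phi v = (v x - u j x) + (u j x - Phi (u j)) - (Phi v - Phi (u j)).
    by ring.
  apply: le_trans (ler_normB _ _) _; apply: le_trans (lerD (ler_normD _ _) (lexx _)) _.
  by have := xu j; lra.
have [z0|z_neq0] := eqVneq (dnorm z) 0.
  have := Ph.2 z zd; rewrite z0 normr_le0 => /eqP ->.
  by rewrite dnorm0_apply // subr0 normr0 mulr0.
have s_gt0 : 0 < dnorm z by rewrite lt_neqAle eq_sym z_neq0 dnorm_nneg.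
have v1 : dnorm (fun u => (dnorm z)^-1 * z u) = 1.
  by rewrite dnormM // normfV gtr0_norm // mulVf ?gt_eqF.
have := unit _ (dspanM _ Ez) v1.
by rewrite bidualM // -mulrBr normrM normfV (gtr0_norm s_gt0) ler_pdivrMl // mulrC.
Qed.

Section Octahedrality.
Variables (R : realType) (X : normedModType R).
Implicit Types (v y z : X -> R) (x : X) (a e t eps delta : R).

Lemma octahedral_ineq_large z y a eps : is_dual z -> is_dual y -> dnorm y = 1 ->
  0 < eps -> 2 <= eps * dnorm z -> `|a| <= dnorm z ->
  (1 - eps) * (`|a| + 1) <= dnorm (fun w => z w + y w).
Proof.
move=> zd yd y1 eps_gt0 z_large az; have := lerB_dnormD zd yd; rewrite y1.
have [eps_ge1|eps_lt1] := lerP 1 eps.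
  by have := dnorm_nneg (is_dualD zd yd); have := normr_ge0 a; nra.
have : (1 - eps) * `|a| <= (1 - eps) * dnorm z by rewrite ler_wpM2l //; lra.
nra.
Qed.

Lemma octahedral_ineq_perturb (u : X -> R) v y x e t delta :
  is_dual u -> is_dual v -> is_dual y -> `|x| <= 1 -> 0 <= e <= 1 ->
  dnorm (fun w => v w - u w) <= delta ->
  (1 - e) * (`|u x| + t) <= dnorm (fun w => u w + t * y w) ->
  (1 - e) * (`|v x| + t) - 2 * delta <= dnorm (fun w => v w + t * y w).
Proof.
move=> ud vd yd x1 /andP[e_ge0 e_le1] vu uy.
have vux : `|v x| - `|u x| <= delta.
  exact: le_trans (lerB_dist _ _) (le_trans (ler_dnorm (is_dualB vd ud) x1) vu).
have uyvy : dnorm (fun w => u w + t * y w) <= dnorm (fun w => v w + t * y w) + delta.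
  have -> : (fun w => u w + t * y w) = (fun w => (v w + t * y w) - (v w - u w)).
    by apply: funext => w; ring.
  apply: le_trans (ler_dnormB (is_dualD vd (is_dualM t yd)) (is_dualB vd ud)) _.
  by rewrite lerD2l.
have delta_ge0 : 0 <= delta := le_trans (dnorm_nneg (is_dualB vd ud)) vu.
nra.
Qed.

Lemma octa_ineq_epsW (E : set (X -> R)) (P : (X -> R) -> R) eps' eps :
  eps' <= eps ->
  (exists y, is_dual y /\ dnorm y = 1 /\ forall z, E z ->
     dnorm (fun u => z u + y u) >= (1 - eps') * (`|P z| + dnorm y)) ->
  exists y, is_dual y /\ dnorm y = 1 /\ forall z, E z ->
     dnorm (fun u => z u + y u) >= (1 - eps) * (`|P z| + dnorm y).
Proof.
move=> le_eps [y [yd [y1 yE]]]; exists y; do 2 split=> //; move=> z Ez.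
apply: le_trans (yE z Ez); apply: ler_wpM2r; last lra.
exact: addr_ge0 (normr_ge0 _) (dnorm_nneg yd).
Qed.

Definition octa_points : Prop :=
  forall (E : set (X -> R)) (x : X) (eps : R),
    fd_dual_subspace E -> `|x| <= 1 -> 0 < eps ->
    exists y, is_dual y /\ dnorm y = 1 /\
      forall z, E z -> dnorm (fun u => z u + y u) >= (1 - eps) * (`|z x| + dnorm y).

Definition octa_finite : Prop :=
  forall (n : nat) (xs : 'I_n -> X -> R) (x : X) (eps : R),
    (forall i, is_dual (xs i) /\ dnorm (xs i) = 1) -> `|x| <= 1 -> 0 < eps ->
    exists y, is_dual y /\ dnorm y = 1 /\
      forall (i : 'I_n) (t : R), eps <= t ->
        dnorm (fun u => xs i u + t * y u) >= (1 - eps) * (`|xs i x| + t).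

Lemma woh_octa_points : dual_weakly_octahedral X -> octa_points.
Proof.
move=> woh E x eps E_fd x1; apply: woh E_fd _.
by split=> // f fd; exact: ler_dnorm.
Qed.

Lemma octa_points_finite : octa_points -> octa_finite.
Proof.
move=> points n xs x eps xs1 x1 eps_gt0.
have xsd i : is_dual (xs i) by case: (xs1 i).
have E_fd : fd_dual_subspace (dspan xs) by exists n, xs.
have [y [yd [y1 yxs]]] := points _ x eps E_fd x1 eps_gt0.
exists y; do 2 split=> //; move=> i t eps_le_t; have t_gt0 := lt_le_trans eps_gt0 eps_le_t.
have := yxs _ (dspanM t^-1 (dspan_mem xs i)); rewrite y1.
have -> : (fun u => xs i u + t * y u) = (fun u => t * (t^-1 * xs i u + y u)).
  by apply: funext => u; rewrite mulrDr mulrA mulfV ?gt_eqF ?mul1r.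
move=> yxs_i; rewrite dnormM ?(gtr0_norm t_gt0); last exact: is_dualD (is_dualM _ (xsd i)) yd.
have -> : (1 - eps) * (`|xs i x| + t) = t * ((1 - eps) * (`|t^-1 * xs i x| + 1)).
  have tV_gt0 : 0 < t^-1 by rewrite invr_gt0.
  by rewrite normrM (gtr0_norm tV_gt0); field; rewrite gt_eqF.
by rewrite ler_pM2l.
Qed.

Lemma octa_points_woh : octa_points -> dual_weakly_octahedral X.
Proof.
move=> points E Phi eps E_fd Ph eps_gt0.
wlog eps_lt1 : eps eps_gt0 / eps < 1.
  move=> main; have [eps_lt1|eps_ge1] := ltrP eps 1; first exact: main.
  by apply: (octa_ineq_epsW (P := Phi) (eps' := 1 / 2)); [lra | apply: main; lra].
have [n [F [Fd E_def]]] := E_fd.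
(* As ||z + y|| >= 1/2, the Helly error (eps/6) ||z|| <= (eps/6) (||z + y|| + 1)
   is at most (eps/2) ||z + y||. *)
have [x [x1 xPhi]] := helly_approx_dspan Fd Ph (divr_gt0 eps_gt0 (ltr0n _ 6)).
have [y [yd [y1 yE]]] := points E x (eps / 2) E_fd x1 (divr_gt0 eps_gt0 (ltr0n _ 2)).
exists y; do 2 split=> //; move=> z Ez; rewrite y1.
have Ez' : dspan F z by move: Ez; rewrite E_def.
have zd := dspan_is_dual Fd Ez'.
have := yE z Ez; rewrite y1; set N := dnorm _ => zy.
have zN : dnorm z <= N + 1 by have := lerB_dnormD zd yd; rewrite y1 -/N; lra.
have Phi_zx : `|Phi z| <= `|z x| + eps / 6 * dnorm z.
  by have := lerB_dist (Phi z) (z x); rewrite distrC; have := xPhi z Ez'; lra.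
have N_ge : 1 / 2 <= N by have := normr_ge0 (z x); nra.
have := normr_ge0 (z x); have := dnorm_nneg zd.
nra.
Qed.

Lemma octa_finite_points : octa_finite -> octa_points.
Proof.
move=> finite E x eps E_fd x1 eps_gt0.
wlog eps_lt1 : eps eps_gt0 / eps < 1.
  move=> main; have [eps_lt1|eps_ge1] := ltrP eps 1; first exact: main.
  by apply: (octa_ineq_epsW (P := fun z => z x) (eps' := 1 / 2)); [lra | apply: main; lra].
have [n [F [Fd E_def]]] := E_fd.
(* Only ||z|| < 2/eps needs the net, whose error 2 delta ||z|| is then below eps/2. *)
pose delta := eps ^+ 2 / 8.
have delta_gt0 : 0 < delta by rewrite divr_gt0 // exprn_gt0.
have [k [u [ud unet]]] := dspan_sphere_net Fd delta_gt0.
have [y [yd [y1 yu]]] := finite k u x (eps / 2) ud x1 (divr_gt0 eps_gt0 (ltr0n _ 2)).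
exists y; do 2 split=> //; move=> z Ez; rewrite y1.
have Ez' : dspan F z by move: Ez; rewrite E_def.
have zd := dspan_is_dual Fd Ez'.
have [z0|z_neq0] := eqVneq (dnorm z) 0.
  rewrite (dnorm0_apply x zd z0) normr0 add0r mulr1.
  under [fun w => _]funext => w do rewrite (dnorm0_apply w zd z0) add0r.
  by rewrite y1; lra.
have s_gt0 : 0 < dnorm z by rewrite lt_neqAle eq_sym z_neq0 dnorm_nneg.
have [z_large|z_small] := lerP 2 (eps * dnorm z).
  exact: octahedral_ineq_large zd yd y1 eps_gt0 z_large (ler_dnorm zd x1).
pose v w := (dnorm z)^-1 * z w.
have v1 : dnorm v = 1 by rewrite dnormM // normfV gtr0_norm // mulVf ?gt_eqF.
have [j vu] := unet v (dspanM _ Ez') v1.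
have t_ge : eps / 2 <= (dnorm z)^-1.
  by rewrite -(ler_pM2l s_gt0) mulfV ?gt_eqF //; nra.
have e01 : 0 <= eps / 2 <= 1 by apply/andP; split; lra.
have := octahedral_ineq_perturb (ud j).1 (is_dualM _ zd) yd x1 e01 vu (yu j _ t_ge).
have -> : (fun w => v w + (dnorm z)^-1 * y w) = (fun w => (dnorm z)^-1 * (z w + y w)).
  by apply: funext => w; rewrite mulrDr.
rewrite (dnormM _ (is_dualD zd yd)) normrM normfV (gtr0_norm s_gt0).
have -> : (1 - eps / 2) * ((dnorm z)^-1 * `|z x| + (dnorm z)^-1) - 2 * delta =
    (dnorm z)^-1 * ((1 - eps / 2) * (`|z x| + 1) - 2 * delta * dnorm z).
  by field; rewrite gt_eqF.
rewrite ler_pM2l ?invr_gt0 // => zy.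
have : eps * (eps * dnorm z) <= eps * 2 by rewrite ler_pM2l //; exact: ltW.
by have := normr_ge0 (z x); rewrite /delta in zy; nra.
Qed.

End Octahedrality.

Theorem proposition2p6 (R : realType) (X : completeNormedModType R)
  (hX : exists x : X, x != 0) :
  (dual_weakly_octahedral X <->
   (forall (E : set (X -> R)) (x : X) (eps : R),
      fd_dual_subspace E -> `|x| <= 1 -> 0 < eps ->
      exists y : X -> R, is_dual y /\ dnorm y = 1 /\
        forall z, E z ->
          dnorm (fun u => z u + y u) >= (1 - eps) * (`|z x| + dnorm y)))
  /\
  ((forall (E : set (X -> R)) (x : X) (eps : R),
      fd_dual_subspace E -> `|x| <= 1 -> 0 < eps ->
      exists y : X -> R, is_dual y /\ dnorm y = 1 /\
        forall z, E z ->
          dnorm (fun u => z u + y u) >= (1 - eps) * (`|z x| + dnorm y))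
   <->
   (forall (n : nat) (xs : 'I_n -> X -> R) (x : X) (eps : R),
      (forall i, is_dual (xs i) /\ dnorm (xs i) = 1) -> `|x| <= 1 -> 0 < eps ->
      exists y : X -> R, is_dual y /\ dnorm y = 1 /\
        forall (i : 'I_n) (t : R), eps <= t ->
          dnorm (fun u => xs i u + t * y u) >= (1 - eps) * (`|xs i x| + t))).
Proof.
split; split.
- exact: woh_octa_points.
- exact: octa_points_woh.
- exact: octa_points_finite.
- exact: octa_finite_points.
Qed.
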